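(* Let $L$ be an i--lattice. If ${\rm Con}(L)$ is a Boolean algebra, then ${\rm Con}_{\mathbb{I}}(L)$ is a Boolean subalgebra of ${\rm Con}(L)$.
   Context: An i--lattice is a lattice $L$ with a unary operation $'$ such that $a''=a$ and $a\leq b$ implies $b'\leq a'$ for all $a,b\in L$. ${\rm Con}(L)$ is the lattice of lattice congruences of $L$, and ${\rm Con}_{\mathbb{I}}(L)$ is the set of lattice congruences $\theta$ that also preserve the involution, i.e. $(a,b)\in\theta$ implies $(a',b')\in\theta$ (it is a sublattice of ${\rm Con}(L)$). *)

From HB Require Import structures.
From mathcomp Require Import all_boot all_order.
From Stdlib Require Import Relations.
Set Implicit Arguments. Unset Strict Implicit. Unset Printing Implicit Defensive.
Import Order.TTheory.
Local Open Scope order_scope.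

Definition is_ilattice_inv {d} {L : latticeType d} (inv : L -> L) : Prop :=
  (forall a : L, inv (inv a) = a) /\ (forall a b : L, a <= b -> inv b <= inv a).

Definition rel_eq {T : Type} (R S : T -> T -> Prop) : Prop :=
  forall a b, R a b <-> S a b.

Definition lattice_congruence {d} {L : latticeType d} (R : L -> L -> Prop) : Prop :=
  equivalence L R /\
  (forall a b c e : L, R a b -> R c e -> R (a `&` c) (b `&` e)) /\
  (forall a b c e : L, R a b -> R c e -> R (a `|` c) (b `|` e)).

Definition inv_congruence {d} {L : latticeType d} (inv : L -> L)
    (R : L -> L -> Prop) : Prop :=
  lattice_congruence R /\ (forall a b : L, R a b -> R (inv a) (inv b)).

Definition con_bot {T : Type} : T -> T -> Prop := fun a b => a = b.
Definition con_top {T : Type} : T -> T -> Prop := fun _ _ => True.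

(* Meet and join in Con(L): intersection, and the transitive closure of the
   union (which is the least congruence containing both). *)
Definition con_meet {T : Type} (R S : T -> T -> Prop) : T -> T -> Prop :=
  fun a b => R a b /\ S a b.
Definition con_join {T : Type} (R S : T -> T -> Prop) : T -> T -> Prop :=
  clos_trans T (fun a b => R a b \/ S a b).

Definition con_complement {T : Type} (R S : T -> T -> Prop) : Prop :=
  rel_eq (con_meet R S) con_bot /\ rel_eq (con_join R S) con_top.

Definition Con_boolean {d} (L : latticeType d) : Prop :=
  (forall R S U : L -> L -> Prop,
      lattice_congruence R -> lattice_congruence S -> lattice_congruence U ->
      rel_eq (con_meet R (con_join S U))
             (con_join (con_meet R S) (con_meet R U))) /\
  (forall R : L -> L -> Prop, lattice_congruence R ->
      exists S, lattice_congruence S /\ con_complement R S).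

Definition ConI_boolean_subalgebra {d} (L : latticeType d) (inv : L -> L) : Prop :=
  inv_congruence inv (@con_bot L) /\
  inv_congruence inv (@con_top L) /\
  (forall R S, inv_congruence inv R -> inv_congruence inv S ->
     inv_congruence inv (con_meet R S)) /\
  (forall R S, inv_congruence inv R -> inv_congruence inv S ->
     inv_congruence inv (con_join R S)) /\
  (forall R S, inv_congruence inv R -> lattice_congruence S ->
     con_complement R S -> inv_congruence inv S).
Arguments ConI_boolean_subalgebra {d} L inv.

(* Con_I(L) always contains the trivial congruences and is closed under
   intersection and under joins, since the involution maps generating chains
   to generating chains.  The point is complements: the involution is a dual
   lattice automorphism, so pulling a congruence S back along it gives a
   congruence S'; if R is involution-invariant and S is a complement of R, then
   S' is again a complement of R.  In a distributive lattice complements are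
   unique, so S = S', i.e. S preserves the involution. *)

From mathcomp Require Import all_boot all_order.
From Stdlib Require Import Relations.
Set Implicit Arguments. Unset Strict Implicit.
Import Order.TTheory.
Local Open Scope order_scope.

Section ConOperations.
Variable T : Type.

Lemma con_join_map (R S R' S' : T -> T -> Prop) (f : T -> T) :
  (forall a b, R a b -> R' (f a) (f b)) -> (forall a b, S a b -> S' (f a) (f b)) ->
  forall a b, con_join R S a b -> con_join R' S' (f a) (f b).
Proof.
move=> fR fS a b; elim=> [x y [Rxy|Sxy]|x y z _ IHxy _ IHyz].
- by apply: t_step; left; apply: fR.
- by apply: t_step; right; apply: fS.
- exact: t_trans IHxy IHyz.
Qed.

Lemma con_join_equiv (R S : T -> T -> Prop) :
  equivalence T R -> equivalence T S -> equivalence T (con_join R S).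
Proof.
move=> [rR _ sR] [_ _ sS]; split.
- by move=> x; apply: t_step; left.
- exact: t_trans.
- move=> x y; elim=> [a b [Rab|Sab]|a b c _ IHab _ IHbc].
  + by apply: t_step; left; apply: sR.
  + by apply: t_step; right; apply: sS.
  + exact: t_trans IHbc IHab.
Qed.

Lemma con_meet_equiv (R S : T -> T -> Prop) :
  equivalence T R -> equivalence T S -> equivalence T (con_meet R S).
Proof.
move=> [rR tR sR] [rS tS sS]; split.
- by move=> x; split.
- by move=> x y z [Rxy Sxy] [Ryz Syz]; split; [apply: (tR _ y)|apply: (tS _ y)].
- by move=> x y [Rxy Sxy]; split; [apply: sR|apply: sS].
Qed.

End ConOperations.

Section LatticeCongruences.
Context {d : Order.disp_t} {L : latticeType d}.
Implicit Types R S U : L -> L -> Prop.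

Lemma con_bot_lattice_congruence : lattice_congruence (@con_bot L).
Proof.
split; last by split=> a b c e -> ->.
by split; [move=> x | move=> x y z -> | move=> x y ->].
Qed.

Lemma con_top_lattice_congruence : lattice_congruence (@con_top L).
Proof. by do !split. Qed.

Lemma con_meet_lattice_congruence R S :
  lattice_congruence R -> lattice_congruence S ->
  lattice_congruence (con_meet R S).
Proof.
move=> [eR [mR jR]] [eS [mS jS]]; split; first exact: con_meet_equiv.
by split=> a b c e [Rab Sab] [Rce Sce]; split; auto.
Qed.

(* Change one argument at a time: f a c ~ f b c ~ f b e. *)
Lemma con_join_compat R S (f : L -> L -> L) :
  reflexive L R -> reflexive L S ->
  (forall a b c e, R a b -> R c e -> R (f a c) (f b e)) ->
  (forall a b c e, S a b -> S c e -> S (f a c) (f b e)) ->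
  forall a b c e, con_join R S a b -> con_join R S c e ->
    con_join R S (f a c) (f b e).
Proof.
move=> rR rS fR fS a b c e RSab RSce; apply: (t_trans _ _ _ (f b c)).
- by apply: (@con_join_map _ R S R S (f^~ c)) RSab => x y ?; [apply: fR|apply: fS].
- by apply: (@con_join_map _ R S R S (f b)) RSce => x y ?; [apply: fR|apply: fS].
Qed.

Lemma con_join_lattice_congruence R S :
  lattice_congruence R -> lattice_congruence S ->
  lattice_congruence (con_join R S).
Proof.
move=> [eR [mR jR]] [eS [mS jS]]; split; first exact: con_join_equiv.
have rR := equiv_refl _ _ eR; have rS := equiv_refl _ _ eS.
by split; apply: con_join_compat.
Qed.

Lemma con_distributive_sub_complement R S U :
  (forall R S U, lattice_congruence R -> lattice_congruence S ->
     lattice_congruence U ->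
     rel_eq (con_meet R (con_join S U)) (con_join (con_meet R S) (con_meet R U))) ->
  lattice_congruence R -> lattice_congruence S -> lattice_congruence U ->
  rel_eq (con_meet R S) con_bot -> rel_eq (con_join R U) con_top ->
  forall a b, S a b -> U a b.
Proof.
move=> distr lR lS lU meetRS joinRU a b Sab.
have [[rU tU _] _] := lU.
have /(distr _ _ _ lS lR lU a b) : con_meet S (con_join R U) a b.
  by split=> //; apply/joinRU.
elim=> [x y [[Sxy Rxy]|[_ Uxy]]|x y z _ Uxy _ Uyz] //.
- by have -> : x = y by apply/meetRS; split.
- exact: tU Uxy Uyz.
Qed.

End LatticeCongruences.

Section Involution.
Context {d : Order.disp_t} {L : latticeType d}.
Variable inv : L -> L.
Hypothesis inv_ilattice : is_ilattice_inv inv.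

Lemma invK : forall a, inv (inv a) = a.
Proof. by case: inv_ilattice. Qed.

Lemma le_inv a b : (inv a <= inv b) = (b <= a).
Proof.
have [_ inv_anti] := inv_ilattice.
apply/idP/idP => [/inv_anti|/inv_anti//]; by rewrite !invK.
Qed.

Lemma le_inv_swap a b : (inv a <= b) = (inv b <= a).
Proof. by rewrite -[in LHS](invK b) le_inv. Qed.

Lemma inv_meet a b : inv (a `&` b) = inv a `|` inv b.
Proof.
apply: le_anti; rewrite leUx !le_inv leIl leIr andbT.
by rewrite le_inv_swap lexI !(le_inv_swap (inv a `|` inv b)) leUl leUr.
Qed.

Lemma inv_join a b : inv (a `|` b) = inv a `&` inv b.
Proof. by rewrite -[a]invK -[b]invK -inv_meet !invK. Qed.

Definition con_inv (R : L -> L -> Prop) : L -> L -> Prop :=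
  fun a b => R (inv a) (inv b).

Lemma con_inv_lattice_congruence R :
  lattice_congruence R -> lattice_congruence (con_inv R).
Proof.
move=> [[rR tR sR] [mR jR]]; split; first split.
- by move=> x; apply: rR.
- by move=> x y z; apply: tR.
- by move=> x y; apply: sR.
by split=> a b c e Rab Rce; rewrite /con_inv ?inv_meet ?inv_join; auto.
Qed.

Lemma con_join_con_inv_top R S :
  (forall a b, R a b -> R (inv a) (inv b)) ->
  rel_eq (con_join R S) con_top -> rel_eq (con_join R (con_inv S)) con_top.
Proof.
move=> invR joinRS a b; split=> // _; rewrite -(invK a) -(invK b).
apply: (con_join_map (S := S) invR) => [x y|]; first by rewrite /con_inv !invK.
exact/joinRS.
Qed.

Lemma inv_congruence_con_meet R S :
  inv_congruence inv R -> inv_congruence inv S -> inv_congruence inv (con_meet R S).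
Proof.
move=> [lR invR] [lS invS]; split; first exact: con_meet_lattice_congruence.
by move=> a b [/invR ? /invS ?].
Qed.

Lemma inv_congruence_con_join R S :
  inv_congruence inv R -> inv_congruence inv S -> inv_congruence inv (con_join R S).
Proof.
move=> [lR invR] [lS invS]; split; first exact: con_join_lattice_congruence.
exact: con_join_map.
Qed.

End Involution.

Theorem proposition4p8 (d : Order.disp_t) (L : latticeType d) (inv : L -> L) :
  is_ilattice_inv inv -> Con_boolean L -> ConI_boolean_subalgebra L inv.
Proof.
move=> inv_ilattice [distr _].
split; [|split; [|split; [|split]]].
- by split; [exact: con_bot_lattice_congruence | move=> a b ->].
- by split; [exact: con_top_lattice_congruence | by []].
- exact: inv_congruence_con_meet.
- exact: inv_congruence_con_join.
- move=> R S [lR invR] lS complRS; split=> // a b.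
  have [meetRS joinRS] := complRS.
  have lS' := con_inv_lattice_congruence inv_ilattice lS.
  have joinRS' := con_join_con_inv_top inv_ilattice invR joinRS.
  exact: (con_distributive_sub_complement distr lR lS lS' meetRS joinRS').
Qed.
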